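(* Let $\phi,\psi$ be literals on two distinct atoms, and let $C=\{\mathbf{O}(\phi),\ \mathbf{O}(\neg\phi|\psi),\ \mathbf{O}(\phi|\neg\psi)\}$ (a contrary-to-duty framework). Then $C$ is modelled by a consistent CP-net: the prescriptive CP-net induced by $C$ is consistent and its induced preorder is a preference model satisfying every norm in $C$.
   Context: Norms: $\mathbf{O}(\chi|\theta)$ reads ''under condition $\chi$ (a conjunction of literals), the literal $\theta$ is obligatory''; $\mathbf{O}(\theta)$ abbreviates $\mathbf{O}(\top|\theta)$. Thus $C$ says: $\phi$ is obligatory; under $\neg\phi$, $\psi$ is obligatory; under $\phi$, $\neg\psi$ is obligatory. Outcomes are complete truth assignments to the atoms (here: to the variables $\Phi$, $\Psi$ of $\phi,\psi$, each with two values, $\bar\phi$ denoting the complement of $\phi$). A preference model is a preorder $\preceq$ on outcomes; $v\preceq_\theta u$ means $v,u$ differ only in the variable of $\theta$ and $v\preceq u$. A preference model satisfies $\mathbf{O}(\chi|\theta)$ iff for all outcomes $v,u$ with $v\models\chi$, $u\models\chi$: if $v\models\theta$ and $v\preceq_\theta u$ then $u\models\theta$. A CP-net (with indifference) over binary variables consists of a directed dependency graph and, for each variable, a conditional preference table of statements ''$a: x\prec y$'' or ''$a: x\approx y$'' over its two values given an assignment $a$ to its parents. Its induced preorder is the reflexive transitive closure of the single-variable flips: outcomes differing only in variable $X$ are related as the applicable statement of the table of $X$ (given the parents' values) ranks their $X$-values. The prescriptive CP-net of a set of obligations adds, for each $\mathbf{O}(\chi|\theta)$, edges from the variables of the literals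 of $\chi$ to the variable $\Theta$ of $\theta$ and the statement $\chi:\bar\theta\prec\theta$ to the table of $\Theta$. A CP-net is consistent if its induced order contains no dominance cycle, i.e. no outcome is strictly preferred to itself. *)

From mathcomp Require Import all_boot.
From Stdlib Require Import Relations. From Stdlib Require List.
Set Implicit Arguments. Unset Strict Implicit. Unset Printing Implicit Defensive.

(* A literal on atom X is the pair (X, b): it is the positive literal X if
   b = true and the negative literal ~X if b = false. *)
Definition literal (V : Type) := (V * bool)%type.
Definition neg_lit (V : Type) (l : literal V) : literal V := (l.1, ~~ l.2).

Definition outcome (V : Type) := V -> bool.
Definition sat_lit (V : Type) (o : outcome V) (l : literal V) : Prop := o l.1 = l.2.
Definition sat_conj (V : Type) (o : outcome V) (chi : seq (literal V)) : Prop :=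
  forall l, List.In l chi -> sat_lit o l.

(* O(chi | theta): under condition chi, literal theta is obligatory. *)
Record obligation (V : Type) := Obl { ocond : seq (literal V); oobj : literal V }.

Definition agree_off (V : eqType) (X : V) (v u : outcome V) : Prop :=
  forall Y, Y != X -> v Y = u Y.

Definition rel_on_var (V : eqType) (R : outcome V -> outcome V -> Prop) (X : V)
  (v u : outcome V) : Prop := agree_off X v u /\ R v u.

Definition is_preorder (V : Type) (R : outcome V -> outcome V -> Prop) : Prop :=
  (forall x, R x x) /\ (forall x y z, R x y -> R y z -> R x z).

Definition satisfies_obl (V : eqType) (R : outcome V -> outcome V -> Prop)
  (n : obligation V) : Prop :=
  forall v u, sat_conj v (ocond n) -> sat_conj u (ocond n) ->
    sat_lit v (oobj n) -> rel_on_var R (oobj n).1 v u -> sat_lit u (oobj n).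

Inductive cmp := Prec | Indiff.
(* statement  "scond : slo < shi"  (Prec) or "scond : slo ~ shi" (Indiff) *)
Record cpstmt (V : Type) := CPStmt
  { scond : seq (literal V); skind : cmp; slo : bool; shi : bool }.
Record cpnet (V : Type) := CPNet
  { cp_graph : V -> V -> bool;            (* dependency graph: edge X -> Y *)
    cp_table : V -> seq (cpstmt V) }.

Definition strict_flip (V : eqType) (N : cpnet V) (v u : outcome V) : Prop :=
  exists X s, List.In s (cp_table N X) /\ skind s = Prec /\ agree_off X v u /\
    sat_conj v (scond s) /\ v X = slo s /\ u X = shi s.

Definition indiff_flip (V : eqType) (N : cpnet V) (v u : outcome V) : Prop :=
  exists X s, List.In s (cp_table N X) /\ skind s = Indiff /\ agree_off X v u /\
    sat_conj v (scond s) /\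
    ((v X = slo s /\ u X = shi s) \/ (v X = shi s /\ u X = slo s)).

Definition flip (V : eqType) (N : cpnet V) (v u : outcome V) : Prop :=
  strict_flip N v u \/ indiff_flip N v u.

Definition induced (V : eqType) (N : cpnet V) : outcome V -> outcome V -> Prop :=
  clos_refl_trans (outcome V) (flip N).

(* consistency: no dominance cycle, i.e. no cycle of flips containing a strict
   flip (no outcome strictly preferred to itself) *)
Definition consistent (V : eqType) (N : cpnet V) : Prop :=
  ~ (exists v u, strict_flip N v u /\ induced N u v).

Definition prescriptive (V : eqType) (C : seq (obligation V)) : cpnet V :=
  CPNet (fun X Y => has (fun n => ((oobj n).1 == Y) && (X \in map fst (ocond n))) C)
        (fun X => [seq CPStmt (ocond n) Prec (~~ (oobj n).2) (oobj n).2
                  | n <- C & (oobj n).1 == X]).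

From mathcomp Require Import all_boot.
From Stdlib Require Import Relations. From Stdlib Require List.

Set Implicit Arguments.
Unset Strict Implicit.

(* A flip of a prescriptive CP-net repairs a violated norm: it moves from an
   outcome satisfying the condition but not the object of some norm to the
   outcome that only changes the object's variable.  For the contrary-to-duty
   framework, ranking the worlds
     phi /\ ~psi  >  phi /\ psi  >  ~phi /\ psi  >  ~phi /\ ~psi
   every repair strictly climbs, so there is no dominance cycle.  Conversely, in
   any consistent prescriptive net, if v <= u with u violating a norm that v
   obeys, the repair u -> v would be a strict flip closing a dominance cycle;
   hence the induced preorder satisfies every norm. *)

Section CPNets.
Variable V : eqType.

Lemma induced_preorder (N : cpnet V) : is_preorder (induced N).
Proof. by split=> [x|x y z]; [apply: rt_refl | apply: rt_trans]. Qed.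

Lemma consistent_of_rank (N : cpnet V) (rk : outcome V -> nat) :
  (forall v u, flip N v u -> rk v <= rk u) ->
  (forall v u, strict_flip N v u -> rk v < rk u) ->
  consistent N.
Proof.
move=> flip_le strict_lt [v [u [vu uv]]].
have induced_le : rk u <= rk v.
  by elim: uv => [x y /flip_le | x | x y z _ + _] //; apply: leq_trans.
by have := leq_ltn_trans induced_le (strict_lt _ _ vu); rewrite ltnn.
Qed.

Definition repairs (n : obligation V) (v u : outcome V) : Prop :=
  [/\ agree_off (oobj n).1 v u, sat_conj v (ocond n),
      v (oobj n).1 = ~~ (oobj n).2 & u (oobj n).1 = (oobj n).2].

Lemma in_prescriptive_table (C : seq (obligation V)) X s :
  List.In s (cp_table (prescriptive C) X) <->
  exists2 n, List.In n C &
    (oobj n).1 = X /\ s = CPStmt (ocond n) Prec (~~ (oobj n).2) (oobj n).2.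
Proof.
elim: C => [|m C IH] /=; first by split=> [[]|[]].
case: eqP => [mX | mX] /=; rewrite IH.
- split=> [[<- | [n Cn ns]] | [n [<- | Cn] [nX ->]]].
  + by exists m; [left|].
  + by exists n; [right|].
  + by left.
  + by right; exists n.
- split=> [[n Cn ns] | [n [<- [] // | Cn] ns]]; first by exists n; [right|].
  by exists n.
Qed.

Lemma strict_flip_prescriptiveP (C : seq (obligation V)) v u :
  strict_flip (prescriptive C) v u <-> exists2 n, List.In n C & repairs n v u.
Proof.
split=> [[X [s [/in_prescriptive_table [n Cn [<- ->]] [_ [? [? [? ?]]]]]]] |].
  by exists n.
case=> n Cn [? ? ? ?].
exists (oobj n).1, (CPStmt (ocond n) Prec (~~ (oobj n).2) (oobj n).2).
by split; first by apply/in_prescriptive_table; exists n.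
Qed.

Lemma flip_prescriptive (C : seq (obligation V)) v u :
  flip (prescriptive C) v u -> strict_flip (prescriptive C) v u.
Proof. by case=> // -[X [s [/in_prescriptive_table [n _ [_ ->]] []]]]. Qed.

Lemma consistent_prescriptive_satisfies (C : seq (obligation V)) :
  consistent (prescriptive C) ->
  forall n, List.In n C -> satisfies_obl (induced (prescriptive C)) n.
Proof.
move=> consC n Cn v u _ u_cond v_obj [agree vu].
case: (eqVneq (u (oobj n).1) (oobj n).2) => // u_obj; exfalso.
have {}u_obj : u (oobj n).1 = ~~ (oobj n).2 by case: (u _) (_.2) u_obj => -[].
apply: consC; exists u, v; split=> //.
by apply/strict_flip_prescriptiveP; exists n => //; split=> // Y /agree.
Qed.

End CPNets.

Section ContraryToDuty.
Variables (V : eqType) (a b : V) (pa pb : bool).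
Hypothesis a_neq_b : a != b.

Definition ctd : seq (obligation V) :=
  [:: Obl [::] (a, pa); Obl [:: neg_lit (a, pa)] (b, pb);
      Obl [:: (a, pa)] (neg_lit (b, pb))].

Definition ctd_rank (o : outcome V) : nat :=
  if o a == pa then 2 + (o b != pb) else o b == pb.

Lemma ctd_rank_repairs n v u :
  List.In n ctd -> repairs n v u -> ctd_rank v < ctd_rank u.
Proof.
have b_neq_a : b != a by rewrite eq_sym.
rewrite /ctd_rank; case=> [<- | [<- | [<- | //]]] [/= agree v_cond -> ->].
- by rewrite -(agree b b_neq_a); case: pa; case: (v b); case: pb.
- have := v_cond _ (or_introl erefl); rewrite /sat_lit /= -(agree a a_neq_b) => ->.
  by case: pa; case: pb.
- have := v_cond _ (or_introl erefl); rewrite /sat_lit /= -(agree a a_neq_b) => ->.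
  by case: pa; case: pb.
Qed.

Lemma ctd_consistent : consistent (prescriptive ctd).
Proof.
have strict_lt v u : strict_flip (prescriptive ctd) v u -> ctd_rank v < ctd_rank u.
  by case/strict_flip_prescriptiveP=> n; apply: ctd_rank_repairs.
apply: (consistent_of_rank _ strict_lt) => v u.
by move/flip_prescriptive/strict_lt/ltnW.
Qed.

End ContraryToDuty.

Theorem mainTheorem2 (V : eqType) (a b : V) (pa pb : bool) :
  a != b ->
  let phi : literal V := (a, pa) in
  let psi : literal V := (b, pb) in
  let C : seq (obligation V) :=
    [:: Obl [::] phi; Obl [:: neg_lit phi] psi; Obl [:: phi] (neg_lit psi)] in
  consistent (prescriptive C) /\
  is_preorder (induced (prescriptive C)) /\
  (forall n, List.In n C -> satisfies_obl (induced (prescriptive C)) n).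
Proof.
move=> a_neq_b phi psi C.
have consC : consistent (prescriptive C) := ctd_consistent a_neq_b.
split=> //; split; first exact: induced_preorder.
exact: consistent_prescriptive_satisfies.
Qed.
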